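(* Let $F:\mathbb{P}^2\to\mathbb{P}^5$ be the morphism $$(x;y;z)\mapsto\big(xyz;\ x(z^2-xy);\ x(xz-y^2);\ y(x^2-yz);\ y(xy-z^2);\ 3xyz-(x^3+y^3+z^3)\big).$$ Then $F$ is an immersion, i.e. its differential is injective on the tangent space at every point of $\mathbb{P}^2$. Moreover, $F$ is injective except that the three points $(1;0;0),(0;1;0),(0;0;1)$ are all mapped to $(0;0;0;0;0;1)$ and the three points $(1;1;1),(\omega;\omega^2;1),(\omega^2;\omega;1)$ are all mapped to $(1;0;0;0;0;0)$, where $\omega$ is a primitive cube root of unity.
   Context: Work over $\mathbb{C}$. This $F$ equals $p\circ\phi_S$, where $p$ is the Plücker embedding of $\mathrm{Gr}(2,\mathbb{C}^4)$ in $\mathbb{P}^5$ and $\phi_S$ is the morphism $\mathbb{P}^2\to\mathrm{Gr}(2,\mathbb{C}^4)$ given by the generating sections of $T_{\mathbb{P}^2}$ which are the images under the Euler surjection $\mathcal{O}(1)^3\to T_{\mathbb{P}^2}$ of $(X,0,0),(0,Y,0),(Y,Z,X),(Z,X,Y)$. *)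

From HB Require Import structures.
From mathcomp Require Import all_boot all_order all_algebra.
Set Implicit Arguments. Unset Strict Implicit. Unset Printing Implicit Defensive.
Import Order.TTheory GRing.Theory Num.Theory.
Local Open Scope ring_scope.

(* Coordinates of points of P^2 (resp. P^5) are nonzero row vectors in R^3 (resp. R^6). *)
Definition i0 : 'I_3 := @Ordinal 3 0 isT.
Definition i1 : 'I_3 := @Ordinal 3 1 isT.
Definition i2 : 'I_3 := @Ordinal 3 2 isT.

Definition vec3 (R : comRingType) (x y z : R) : 'rV[R]_3 :=
  \row_(i < 3) [:: x; y; z]`_i.

Definition Fcomp (R : comRingType) (x y z : R) : seq R :=
  [:: x * y * z;
      x * (z ^+ 2 - x * y);
      x * (x * z - y ^+ 2);
      y * (x ^+ 2 - y * z);
      y * (x * y - z ^+ 2);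
      3%:R * x * y * z - (x ^+ 3 + y ^+ 3 + z ^+ 3)].

Definition Fmap (R : comRingType) (p : 'rV[R]_3) : 'rV[R]_6 :=
  \row_(i < 6) (Fcomp (p 0 i0) (p 0 i1) (p 0 i2))`_i.

(* Directional derivative (Jacobian applied to v) of F at p:
   d/dt F(p + t v) at t = 0, computed with polynomials in t. *)
Definition dF (R : comRingType) (p v : 'rV[R]_3) : 'rV[R]_6 :=
  \row_(i < 6)
    ((Fmap (\row_(j < 3) ((p 0 j)%:P + (v 0 j)%:P * 'X)) 0 i)^`()).[0].

Definition proj_eq (R : fieldType) n (u v : 'rV[R]_n) : Prop :=
  exists c : R, c != 0 /\ v = c *: u.

(* Differential of the induced map P^2 -> P^5 injective at [p]:
   the induced map C^3/<p> -> C^6/<F(p)> has zero kernel. *)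
Definition immersion_at (R : fieldType) (p : 'rV[R]_3) : Prop :=
  forall v : 'rV[R]_3,
    (exists c : R, dF p v = c *: Fmap p) -> exists d : R, v = d *: p.

Definition E1 (R : fieldType) (p : 'rV[R]_3) : Prop :=
  proj_eq p (vec3 1 0 0) \/ proj_eq p (vec3 0 1 0) \/ proj_eq p (vec3 0 0 1).

Definition E2 (R : fieldType) (w : R) (p : 'rV[R]_3) : Prop :=
  proj_eq p (vec3 1 1 1) \/ proj_eq p (vec3 w (w ^+ 2) 1)
  \/ proj_eq p (vec3 (w ^+ 2) w 1).

Definition e6 (R : comRingType) (k : nat) : 'rV[R]_6 :=
  \row_(i < 6) (if val i == k then 1 else 0).

From mathcomp Require Import all_boot all_algebra ring.
Import GRing.Theory.
Local Open Scope ring_scope.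
Set Implicit Arguments.
Unset Strict Implicit.

(* The cyclic permutation s : (x;y;z) |-> (y;z;x) satisfies F (s p) = F p *m rot6
   for a linear map rot6, so F, its differential and its fibres behave at p as
   at s p and s^2 p.
   Immersion: by Euler's identity dF_p p = 3 F p, it suffices that the Jacobian
   J of F has trivial kernel at p <> 0; when x <> 0 an explicit matrix L with
   J L = 3 x^6 I shows this, and s handles the points with x = 0.
   Injectivity: the quadratic map Finv satisfies Finv (F p) = h p *: p with
   h = x (xy - z^2) (xz - y^2), so F is projectively injective and nonvanishing
   wherever h, h o s or h o s^2 is nonzero.  These three quintics vanish
   together only at the coordinate points and at the three fixed points of s,
   which F sends to e_5 and e_0 respectively. *)

Lemma proj_eq_sym (K : fieldType) n (u v : 'rV[K]_n) : proj_eq u v -> proj_eq v u.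
Proof.
case=> c [c0 ->]; exists c^-1; split; first by rewrite invr_eq0.
by rewrite scalerA mulVf // scale1r.
Qed.

Lemma proj_eq_scale (K : fieldType) n k (u : 'rV[K]_n) : k != 0 -> proj_eq (k *: u) u.
Proof.
by move=> k0; exists k^-1; split; rewrite ?invr_eq0 // scalerA mulVf // scale1r.
Qed.

Section HomogeneousLeftInverse.
Variables (K : fieldType) (m n k : nat).
Variables (f : 'rV[K]_m -> 'rV[K]_n) (g : 'rV[K]_n -> 'rV[K]_m) (h : 'rV[K]_m -> K).
Hypothesis gZ : forall c v, g (c *: v) = c ^+ k.+1 *: g v.
Hypothesis gf : forall u, g (f u) = h u *: u.

Lemma left_inverse_eq0 u : u != 0 -> f u = 0 -> h u = 0.
Proof.
move=> u0 fu0; have : h u *: u = 0 by rewrite -gf fu0 -(scale0r 0) gZ expr0n scale0r.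
by move/eqP; rewrite scaler_eq0 (negbTE u0) orbF => /eqP.
Qed.

Lemma left_inverse_proj_eq u u' c : u != 0 -> h u != 0 -> c != 0 ->
  f u' = c *: f u -> proj_eq u u'.
Proof.
move=> u0 hu0 c0 fu'.
have e : h u' *: u' = (c ^+ k.+1 * h u) *: u by rewrite -gf fu' gZ gf scalerA.
have hu'0 : h u' != 0.
  apply/eqP => hu'0; move/eqP: e; rewrite hu'0 scale0r eq_sym scaler_eq0.
  by rewrite (negbTE u0) orbF mulf_eq0 expf_eq0 (negbTE c0) (negbTE hu0) andbF.
exists ((h u')^-1 * (c ^+ k.+1 * h u)); split.
  by rewrite !mulf_neq0 ?invr_eq0 ?expf_neq0.
by rewrite -scalerA -e scalerA mulVf ?scale1r.
Qed.

End HomogeneousLeftInverse.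

Section Coordinates.
Variable R : comNzRingType.
Implicit Types x y z a b c d e f : R.

Definition vec6 a b c d e f : 'rV[R]_6 := \row_(i < 6) [:: a; b; c; d; e; f]`_i.

Lemma vec3E (p : 'rV[R]_3) : p = vec3 (p 0 i0) (p 0 i1) (p 0 i2).
Proof.
by apply/rowP => -[[|[|[|//]]] ?]; rewrite mxE /=; congr (p 0 _); apply: val_inj.
Qed.

Lemma vec3Z c x y z : c *: vec3 x y z = vec3 (c * x) (c * y) (c * z).
Proof. by apply/rowP => -[[|[|[|//]]] ?]; rewrite !mxE. Qed.

Lemma vec3_inj x y z a b c :
  vec3 x y z = vec3 a b c -> [/\ x = a, y = b & z = c].
Proof.
by move/rowP=> e; split; [move: (e i0) | move: (e i1) | move: (e i2)]; rewrite !mxE.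
Qed.

Lemma vec6Z k a b c d e f :
  k *: vec6 a b c d e f = vec6 (k * a) (k * b) (k * c) (k * d) (k * e) (k * f).
Proof. by apply/rowP => -[[|[|[|[|[|[|//]]]]]] ?]; rewrite !mxE. Qed.

Lemma Fmap_vec3 x y z : Fmap (vec3 x y z) =
  vec6 (x * y * z) (x * (z ^+ 2 - x * y)) (x * (x * z - y ^+ 2))
       (y * (x ^+ 2 - y * z)) (y * (x * y - z ^+ 2))
       (3%:R * x * y * z - (x ^+ 3 + y ^+ 3 + z ^+ 3)).
Proof. by apply/rowP => -[[|[|[|[|[|[|//]]]]]] ?]; rewrite !mxE. Qed.

Definition jacobian x y z : 'M[R]_(3, 6) := \matrix_(i < 3, j < 6)
  nth 0 (nth [::]
  [:: [:: y * z; z ^+ 2 - 2%:R * x * y; 2%:R * x * z - y ^+ 2;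
          2%:R * x * y; y ^+ 2; 3%:R * (y * z - x ^+ 2)];
      [:: x * z; - x ^+ 2; - (2%:R * x * y);
          x ^+ 2 - 2%:R * y * z; 2%:R * x * y - z ^+ 2; 3%:R * (x * z - y ^+ 2)];
      [:: x * y; 2%:R * x * z; x ^+ 2;
          - y ^+ 2; - (2%:R * y * z); 3%:R * (x * y - z ^+ 2)]] i) j.

Lemma dF_jacobian x y z v : dF (vec3 x y z) v = v *m jacobian x y z.
Proof.
rewrite [v]vec3E; apply/rowP => -[[|[|[|[|[|[|//]]]]]] ?];
  rewrite !(big_ord_recr, big_ord0, mxE) /= !derivE !hornerE /=; ring.
Qed.

Lemma jacobian_euler x y z :
  vec3 x y z *m jacobian x y z = 3%:R *: Fmap (vec3 x y z).
Proof.
apply/rowP => -[[|[|[|[|[|[|//]]]]]] ?];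
  rewrite !(big_ord_recr, big_ord0, mxE) /=; ring.
Qed.

Definition rot6 : 'M[R]_6 := \matrix_(i < 6, j < 6)
  nth 0 (nth [::]
  [:: [:: 1; 0; 0;  0;  0; 0];
      [:: 0; 0; 0; -1;  0; 0];
      [:: 0; 0; 0;  0; -1; 0];
      [:: 0; 1; 0; -1;  0; 0];
      [:: 0; 0; 1;  0; -1; 0];
      [:: 0; 0; 0;  0;  0; 1]] i) j.

Lemma Fmap_rot x y z : Fmap (vec3 y z x) = Fmap (vec3 x y z) *m rot6.
Proof.
rewrite !Fmap_vec3; apply/rowP => -[[|[|[|[|[|[|//]]]]]] ?];
  rewrite !(big_ord_recr, big_ord0, mxE) /=; ring.
Qed.

Lemma jacobian_rot x y z a b c :
  vec3 b c a *m jacobian y z x = vec3 a b c *m jacobian x y z *m rot6.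
Proof.
apply/rowP => -[[|[|[|[|[|[|//]]]]]] ?];
  rewrite !(big_ord_recr, big_ord0, mxE) /=; ring.
Qed.

Definition Finv_factor x y z := x * (x * y - z ^+ 2) * (x * z - y ^+ 2).

Definition Finv (u : 'rV[R]_6) : 'rV[R]_3 :=
  let u_ k := u 0 (inord k) in
  vec3 (- (u_ 1 * u_ 2)) (u_ 2 * u_ 4) (- u_ 1 ^+ 2 - u_ 1 * u_ 3).

Lemma FinvZ c u : Finv (c *: u) = c ^+ 2 *: Finv u.
Proof. by rewrite /Finv vec3Z !mxE; congr vec3; ring. Qed.

Lemma Finv_Fmap x y z : Finv (Fmap (vec3 x y z)) = Finv_factor x y z *: vec3 x y z.
Proof.
by rewrite /Finv vec3Z Fmap_vec3 /Finv_factor !mxE !inordK //=; congr vec3; ring.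
Qed.

Definition jacobian_rinv x y z : 'M[R]_(6, 3) := \matrix_(i < 6, j < 3)
  nth 0 (nth [::]
  [:: [:: 3%:R * x^+4 - 2%:R * x^+2 * y * z - 2%:R * x * y^+3 - 2%:R * x * z^+3
            + 4%:R * y^+2 * z^+2;
          - x^+3 * y + 4%:R * x^+2 * z^+2 + x * y^+2 * z - 3%:R * y * z^+3;
          - x^+3 * z + 4%:R * x^+2 * y^+2 + x * y * z^+2 - 3%:R * y^+3 * z];
      [:: - 2%:R * x^+3 * z - 3%:R * x^+2 * y^+2 - 2%:R * x * y * z^+2
            - 2%:R * y^+3 * z;
          2%:R * x^+2 * y * z + 2%:R * x * y^+3 + 3%:R * y^+2 * z^+2;
          x^+3 * y + 4%:R * x^+2 * z^+2 + 3%:R * x * y^+2 * z];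
      [:: x^+2 * z^+2 + 2%:R * x * y^+2 * z + 2%:R * y * z^+3;
          - 2%:R * x^+2 * y^+2;
          3%:R * x^+4 - x^+2 * y * z - 3%:R * x * y^+3 - 2%:R * x * z^+3
            - 3%:R * y^+2 * z^+2];
      [:: - 2%:R * x^+3 * z - 2%:R * x^+2 * y^+2;
          3%:R * x^+4 + x^+2 * y * z - 3%:R * x * z^+3;
          x^+3 * y + 2%:R * x^+2 * z^+2 + 3%:R * x * y^+2 * z];
      [:: - 2%:R * x^+3 * y - 2%:R * x^+2 * z^+2;
          x^+3 * z + 2%:R * x^+2 * y^+2 + 3%:R * x * y * z^+2;
          3%:R * x^+4 + x^+2 * y * z - 3%:R * x * y^+3];
      [:: - x^+4; 2%:R * x^+3 * y; 2%:R * x^+3 * z]] i) j.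

Lemma mulmx_jacobian_rinv x y z :
  jacobian x y z *m jacobian_rinv x y z = (3%:R * x ^+ 6)%:M.
Proof.
apply/matrixP => -[[|[|[|//]]] ?] [[|[|[|//]]] ?];
  rewrite !(big_ord_recr, big_ord0, mxE) /=; ring.
Qed.

Lemma e6_0_vec6 : e6 R 0 = vec6 1 0 0 0 0 0.
Proof. by apply/rowP => -[[|[|[|[|[|[|//]]]]]] ?]; rewrite !mxE. Qed.

Lemma e6_5_vec6 : e6 R 5 = vec6 0 0 0 0 0 1.
Proof. by apply/rowP => -[[|[|[|[|[|[|//]]]]]] ?]; rewrite !mxE. Qed.

Lemma e6_scale_eq a b : a *: e6 R 0 = b *: e6 R 5 -> a = 0 /\ b = 0.
Proof.
by move/rowP=> e; move: (e ord0) (e ord_max); rewrite !mxE /= !mulr1 !mulr0.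
Qed.

End Coordinates.

Section Field.
Variable R : fieldType.
Implicit Types x y z a b c t : R.

Lemma vec3_eq0 x y z : (vec3 x y z == 0) = [&& x == 0, y == 0 & z == 0].
Proof.
apply/idP/idP => [/eqP/rowP e | /and3P[/eqP-> /eqP-> /eqP->]].
  by move: (e i0) (e i1) (e i2); rewrite !mxE /= => -> -> ->; rewrite eqxx.
by apply/eqP/rowP => -[[|[|[|//]]] ?]; rewrite !mxE.
Qed.

Lemma vec3_rot_eq0 x y z : (vec3 y z x == 0) = (vec3 x y z == 0).
Proof. by rewrite !vec3_eq0 [RHS]andbC andbA. Qed.

Section Immersion.
Hypothesis three_neq0 : 3%:R != 0 :> R.

Lemma jacobian_inj_x x y z (v : 'rV[R]_3) :
  x != 0 -> v *m jacobian x y z = 0 -> v = 0.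
Proof.
move=> x0 /(congr1 (mulmx^~ (jacobian_rinv x y z))).
rewrite -mulmxA mulmx_jacobian_rinv mul0mx mul_mx_scalar => /eqP.
by rewrite scaler_eq0 mulf_eq0 expf_eq0 /= (negbTE x0) (negbTE three_neq0) => /eqP.
Qed.

Lemma jacobian_inj x y z (v : 'rV[R]_3) :
  vec3 x y z != 0 -> v *m jacobian x y z = 0 -> v = 0.
Proof.
rewrite [v]vec3E; move: (v 0 i0) (v 0 i1) (v 0 i2) => a b c p0 Jv0.
have Jv1 : vec3 b c a *m jacobian y z x = 0 by rewrite jacobian_rot Jv0 mul0mx.
have Jv2 : vec3 c a b *m jacobian z x y = 0 by rewrite jacobian_rot Jv1 mul0mx.
have [x0|x0] := eqVneq x 0; last exact: jacobian_inj_x Jv0.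
have [y0|y0] := eqVneq y 0.
  have z0 : z != 0 by move: p0; rewrite vec3_eq0 x0 y0 !eqxx.
  by apply/eqP; rewrite (vec3_rot_eq0 c); apply/eqP; exact: jacobian_inj_x Jv2.
by apply/eqP; rewrite -(vec3_rot_eq0 a); apply/eqP; exact: jacobian_inj_x Jv1.
Qed.

Lemma immersion_at_vec3 x y z : vec3 x y z != 0 -> immersion_at (vec3 x y z).
Proof.
move=> p0 v [k]; rewrite dF_jacobian => Jv.
have : (3%:R *: v - k *: vec3 x y z) *m jacobian x y z = 0.
  by rewrite mulmxBl -!scalemxAl Jv jacobian_euler !scalerA mulrC subrr.
move/(jacobian_inj p0)/eqP; rewrite subr_eq0 => /eqP e.
exists (3%:R^-1 * k); by rewrite -scalerA -e scalerA mulVf ?scale1r.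
Qed.

End Immersion.

Definition coord_point x y z : Prop :=
  (y = 0 /\ z = 0) \/ (x = 0 /\ z = 0) \/ (x = 0 /\ y = 0).

(* The 2 x 2 minors of [x y z; z x y] vanish: (x;y;z) is a fixed point of the
   cyclic permutation of coordinates. *)
Definition cyclic_fixed x y z : Prop :=
  [/\ x * y = z ^+ 2, x * z = y ^+ 2 & x ^+ 2 = y * z].

Lemma exceptional_locus x y z :
  Finv_factor x y z = 0 -> Finv_factor y z x = 0 -> Finv_factor z x y = 0 ->
  coord_point x y z \/ cyclic_fixed x y z.
Proof.
rewrite /Finv_factor => h1 h2 h3.
have [xyz0|] := eqVneq (x * y * z) 0.
  left; rewrite /coord_point; move/eqP: xyz0.
  rewrite !mulf_eq0 -orbA => /or3P[] /eqP c0.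
  - have : y ^+ 2 * z ^+ 3 = 0 by rewrite -oppr0 -h2 c0; ring.
    by move/eqP; rewrite mulf_eq0 !expf_eq0 /= => /orP[] /eqP; tauto.
  - have : x ^+ 2 * z ^+ 3 = 0 by rewrite -oppr0 -h1 c0; ring.
    by move/eqP; rewrite mulf_eq0 !expf_eq0 /= => /orP[] /eqP; tauto.
  - have : x ^+ 2 * y ^+ 3 = 0 by rewrite -oppr0 -h1 c0; ring.
    by move/eqP; rewrite mulf_eq0 !expf_eq0 /= => /orP[] /eqP; tauto.
rewrite !mulf_eq0 !negb_or -andbA => /and3P[x0 y0 z0]; right.
set A := x * y - z ^+ 2; set B := x * z - y ^+ 2; set C := x ^+ 2 - y * z.
have cancel (u v : R) : u != 0 -> u * v = 0 -> v = 0.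
  by move=> u0 /eqP; rewrite mulf_eq0 (negbTE u0) => /eqP.
have AB : A * B = 0 by apply: (cancel x) => //; rewrite -h1 /A /B; ring.
have CA : C * A = 0 by apply: (cancel y) => //; rewrite -oppr0 -h2 /A /C; ring.
have BC : B * C = 0 by apply: (cancel z) => //; rewrite -oppr0 -h3 /B /C; ring.
have sqA : x * A ^+ 2 = y * (C * A) - z * (A * B) by rewrite /A /B /C; ring.
have sqB : z * B ^+ 2 = y * (B * C) - x * (A * B) by rewrite /A /B /C; ring.
have sqC : z * C ^+ 2 = x * (B * C) + y * (C * A) by rewrite /A /B /C; ring.
rewrite AB BC CA !mulr0 ?subr0 ?addr0 in sqA sqB sqC.
have sq0 (u v : R) : u != 0 -> u * v ^+ 2 = 0 -> v = 0.
  by move=> u0 /eqP; rewrite mulf_eq0 expf_eq0 /= (negbTE u0) => /eqP.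
split; apply/eqP; rewrite -subr_eq0; apply/eqP.
- exact: sq0 x0 sqA.
- exact: sq0 z0 sqB.
- exact: sq0 z0 sqC.
Qed.

Lemma Fmap_coord_point x y z : vec3 x y z != 0 -> coord_point x y z ->
  exists2 k, k != 0 & Fmap (vec3 x y z) = k *: e6 R 5.
Proof.
move=> p0 cp; case: cp p0 => [[-> ->]|[[-> ->]|[-> ->]]];
  rewrite vec3_eq0 !eqxx /= ?andbT => u0;
  [exists (- x ^+ 3) | exists (- y ^+ 3) | exists (- z ^+ 3)];
  rewrite ?oppr_eq0 ?expf_neq0 // Fmap_vec3 e6_5_vec6 vec6Z; congr vec6; ring.
Qed.

Lemma cyclic_fixed_neq0 x y z : vec3 x y z != 0 -> cyclic_fixed x y z ->
  [/\ x != 0, y != 0 & z != 0].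
Proof.
rewrite vec3_eq0 => p0 [exy exz exx].
have x0 : x != 0.
  apply: contraNneq p0 => x0; move: exy exz; rewrite x0 !mul0r.
  by move=> /esym/eqP + /esym/eqP; rewrite !expf_eq0 /= eqxx => -> ->.
split=> //; apply/eqP => u0; move/eqP: exx; rewrite u0 ?mul0r ?mulr0 expf_eq0 /=;
  exact/negP.
Qed.

Lemma Fmap_cyclic_fixed x y z : vec3 x y z != 0 -> cyclic_fixed x y z ->
  exists2 k, k != 0 & Fmap (vec3 x y z) = k *: e6 R 0.
Proof.
move=> p0 cf; have [x0 y0 z0] := cyclic_fixed_neq0 p0 cf; case: cf => exy exz exx.
exists (x * y * z); first by rewrite !mulf_neq0.
rewrite Fmap_vec3 e6_0_vec6 vec6Z mulr1 mulr0.
have -> : 3%:R * x * y * z - (x ^+ 3 + y ^+ 3 + z ^+ 3) =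
  x * (y * z - x ^+ 2) + y * (x * z - y ^+ 2) + z * (x * y - z ^+ 2) by ring.
by rewrite -exx exz exy !subrr !mulr0 !addr0.
Qed.

Lemma E1_vec3 x y z : vec3 x y z != 0 -> E1 (vec3 x y z) <-> coord_point x y z.
Proof.
move=> p0; split.
  have cancel (c u : R) : c != 0 -> 0 = c * u -> u = 0.
    by move=> c0 /esym/eqP; rewrite mulf_eq0 (negbTE c0) => /eqP.
  case=> [|[|]] [c [/cancel c0]]; rewrite vec3Z => /vec3_inj[].
  - by move=> _ /c0-> /c0->; left.
  - by move=> /c0-> _ /c0->; right; left.
  - by move=> /c0-> /c0-> _; right; right.
move=> cp; case: cp p0 => [[-> ->]|[[-> ->]|[-> ->]]];
  rewrite vec3_eq0 !eqxx /= ?andbT => u0.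
- have -> : vec3 x 0 0 = x *: vec3 1 0 0 by rewrite vec3Z mulr1 mulr0.
  by left; apply: proj_eq_scale.
- have -> : vec3 0 y 0 = y *: vec3 0 1 0 by rewrite vec3Z mulr1 mulr0.
  by right; left; apply: proj_eq_scale.
- have -> : vec3 0 0 z = z *: vec3 0 0 1 by rewrite vec3Z mulr1 mulr0.
  by right; right; apply: proj_eq_scale.
Qed.

Lemma cyclic_fixedZ c x y z :
  cyclic_fixed x y z -> cyclic_fixed (c * x) (c * y) (c * z).
Proof.
case=> exy exz exx; split.
- by rewrite mulrACA exy -expr2 exprMn.
- by rewrite mulrACA exz -expr2 exprMn.
- by rewrite [RHS]mulrACA -exx -expr2 exprMn.
Qed.

Lemma cyclic_fixed_proj x y z a b c : proj_eq (vec3 x y z) (vec3 a b c) ->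
  cyclic_fixed a b c -> cyclic_fixed x y z.
Proof.
by move/proj_eq_sym=> [d [_]]; rewrite vec3Z => /vec3_inj[-> -> ->]; apply: cyclic_fixedZ.
Qed.

Lemma proj_eq_geometric t x y z : t ^+ 3 = 1 -> x != 0 ->
  y = t * x -> z = t ^+ 2 * x -> proj_eq (vec3 x y z) (vec3 t (t ^+ 2) 1).
Proof.
move=> t3 x0 -> ->; exists (t / x); split.
  rewrite mulf_neq0 ?invr_eq0 //; apply/eqP => t0.
  by move: t3; rewrite t0 exprS mul0r => /eqP; rewrite eq_sym oner_eq0.
rewrite vec3Z; congr vec3; [field|field|rewrite -[in LHS]t3; field]; exact: x0.
Qed.

Lemma E2_vec3 w x y z : (3%N).-primitive_root w -> vec3 x y z != 0 ->
  E2 w (vec3 x y z) <-> cyclic_fixed x y z.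
Proof.
move=> hw p0; have w3 := prim_expr_order hw.
have w4 : (w ^+ 2) ^+ 2 = w by rewrite -exprM -[(2 * 2)%N]/(3 + 1)%N exprD w3 mul1r.
split.
  case=> [|[|]] /cyclic_fixed_proj; apply; split;
    rewrite ?mul1r ?mulr1 ?expr1n ?w4 // -?exprS -?exprSr ?w3 ?expr1n //.
move=> cf; have [x0 _ _] := cyclic_fixed_neq0 p0 cf; case: cf => exy exz exx.
set t := y / x; have ty : y = t * x by rewrite divfK.
have tz : z = t ^+ 2 * x by apply: (mulfI x0); rewrite exz ty; ring.
have t3 : t ^+ 3 = 1.
  apply: (mulIf (expf_neq0 2 x0)); rewrite mul1r [RHS]exx ty tz; ring.
have [i ti] := prim_rootP hw t3.
move: (proj_eq_geometric t3 x0 ty tz); rewrite ti.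
by case: i {ti} => -[|[|[|//]]] /= _ pt; [left | right; left | right; right];
  rewrite ?expr0 ?expr1n ?expr1 ?w4 in pt.
Qed.

Lemma Finv_Fmap_row (p : 'rV[R]_3) :
  Finv (Fmap p) = Finv_factor (p 0 i0) (p 0 i1) (p 0 i2) *: p.
Proof. by rewrite [p in LHS]vec3E Finv_Fmap -vec3E. Qed.

Lemma Fmap_eq0_Finv_factor x y z :
  vec3 x y z != 0 -> Fmap (vec3 x y z) = 0 -> Finv_factor x y z = 0.
Proof. by move=> p0 /(left_inverse_eq0 (@FinvZ R) Finv_Fmap_row p0); rewrite !mxE. Qed.

Lemma Fmap_proj_eq_Finv_factor x y z x' y' z' c :
  vec3 x y z != 0 -> Finv_factor x y z != 0 -> c != 0 ->
  Fmap (vec3 x' y' z') = c *: Fmap (vec3 x y z) ->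
  proj_eq (vec3 x y z) (vec3 x' y' z').
Proof.
move=> p0; have := left_inverse_proj_eq (@FinvZ R) Finv_Fmap_row p0.
by rewrite !mxE; apply.
Qed.

Lemma Fmap_rot_scale x y z x' y' z' c :
  Fmap (vec3 x' y' z') = c *: Fmap (vec3 x y z) ->
  Fmap (vec3 y' z' x') = c *: Fmap (vec3 y z x).
Proof. by rewrite (Fmap_rot x') (Fmap_rot x) => ->; rewrite scalemxAl. Qed.

Lemma proj_eq_rot x y z x' y' z' :
  proj_eq (vec3 y z x) (vec3 y' z' x') -> proj_eq (vec3 x y z) (vec3 x' y' z').
Proof.
by case=> c [c0]; rewrite vec3Z => /vec3_inj[-> -> ->]; exists c; rewrite vec3Z.
Qed.

Lemma Fmap_proj_eq x y z x' y' z' c : vec3 x y z != 0 -> c != 0 ->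
  [\/ Finv_factor x y z != 0, Finv_factor y z x != 0 | Finv_factor z x y != 0] ->
  Fmap (vec3 x' y' z') = c *: Fmap (vec3 x y z) ->
  proj_eq (vec3 x y z) (vec3 x' y' z').
Proof.
move=> p0 c0 [h0|h0|h0] e.
- exact: Fmap_proj_eq_Finv_factor e.
- apply: proj_eq_rot; apply: Fmap_proj_eq_Finv_factor h0 c0 (Fmap_rot_scale e).
  by rewrite vec3_rot_eq0.
- do 2 apply: proj_eq_rot.
  apply: Fmap_proj_eq_Finv_factor h0 c0 (Fmap_rot_scale (Fmap_rot_scale e)).
  by rewrite 2!vec3_rot_eq0.
Qed.

Lemma exceptional_or x y z :
  [\/ Finv_factor x y z != 0, Finv_factor y z x != 0 | Finv_factor z x y != 0] \/
  coord_point x y z \/ cyclic_fixed x y z.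
Proof.
have [h1|] := eqVneq (Finv_factor x y z) 0; last by left; constructor 1.
have [h2|] := eqVneq (Finv_factor y z x) 0; last by left; constructor 2.
have [h3|] := eqVneq (Finv_factor z x y) 0; last by left; constructor 3.
by right; exact: exceptional_locus.
Qed.

Lemma Fmap_neq0 x y z : vec3 x y z != 0 -> Fmap (vec3 x y z) != 0.
Proof.
move=> p0; apply/eqP => F0.
have F1 : Fmap (vec3 y z x) = 0 by rewrite Fmap_rot F0 mul0mx.
have F2 : Fmap (vec3 z x y) = 0 by rewrite Fmap_rot F1 mul0mx.
have p1 : vec3 y z x != 0 by rewrite vec3_rot_eq0.
have p2 : vec3 z x y != 0 by rewrite 2!vec3_rot_eq0.
have := exceptional_locus (Fmap_eq0_Finv_factor p0 F0)
  (Fmap_eq0_Finv_factor p1 F1) (Fmap_eq0_Finv_factor p2 F2).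
case=> [/(Fmap_coord_point p0)|/(Fmap_cyclic_fixed p0)] [k k0].
- rewrite F0 -(scale0r (e6 R 0)) => /e6_scale_eq[_ k00].
  by rewrite k00 eqxx in k0.
- rewrite F0 -(scale0r (e6 R 5)) => /esym/e6_scale_eq[k00 _].
  by rewrite k00 eqxx in k0.
Qed.

Lemma Fmap_coord_cyclic x y z x' y' z' c : vec3 x y z != 0 -> vec3 x' y' z' != 0 ->
  coord_point x y z -> cyclic_fixed x' y' z' ->
  Fmap (vec3 x' y' z') <> c *: Fmap (vec3 x y z).
Proof.
move=> p0 q0 /(Fmap_coord_point p0) [k _ ->] /(Fmap_cyclic_fixed q0) [m m0 ->].
by rewrite scalerA => /e6_scale_eq[m00 _]; move: m0; rewrite m00 eqxx.
Qed.

Lemma Fmap_fibres x y z x' y' z' c : vec3 x y z != 0 -> vec3 x' y' z' != 0 ->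
  c != 0 -> Fmap (vec3 x' y' z') = c *: Fmap (vec3 x y z) ->
  proj_eq (vec3 x y z) (vec3 x' y' z') \/
  (coord_point x y z /\ coord_point x' y' z') \/
  (cyclic_fixed x y z /\ cyclic_fixed x' y' z').
Proof.
move=> p0 q0 c0 e.
have e' : Fmap (vec3 x y z) = c^-1 *: Fmap (vec3 x' y' z').
  by rewrite e scalerA mulVf // scale1r.
have [hp|[cp|fp]] := exceptional_or x y z; first by left; exact: Fmap_proj_eq e.
all: have [hq|[cq|fq]] := exceptional_or x' y' z'.
- by left; apply/proj_eq_sym/(Fmap_proj_eq q0 _ hq e'); rewrite invr_eq0.
- by right; left.
- by case: (Fmap_coord_cyclic p0 q0 cp fq e).
- by left; apply/proj_eq_sym/(Fmap_proj_eq q0 _ hq e'); rewrite invr_eq0.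
- by case: (Fmap_coord_cyclic q0 p0 cq fp e').
- by right; right.
Qed.

End Field.

Unset Implicit Arguments.

Theorem lemma5 (R : closedFieldType) (hchar : [pchar R] =i pred0)
    (w : R) (hw : (3%N).-primitive_root w) :
  (forall p : 'rV[R]_3, p != 0 -> Fmap p != 0) /\
  (forall p : 'rV[R]_3, p != 0 -> immersion_at p) /\
  (forall p q : 'rV[R]_3, p != 0 -> q != 0 -> proj_eq (Fmap p) (Fmap q) ->
     proj_eq p q \/ (E1 p /\ E1 q) \/ (E2 w p /\ E2 w q)) /\
  (forall p : 'rV[R]_3, p != 0 -> E1 p -> proj_eq (Fmap p) (e6 R 5)) /\
  (forall p : 'rV[R]_3, p != 0 -> E2 w p -> proj_eq (Fmap p) (e6 R 0)).
Proof.
have three0 : 3%:R != 0 :> R by move/pcharf0P: hchar => ->.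
split; [|split; [|split; [|split]]].
- by move=> p; rewrite [p]vec3E; apply: Fmap_neq0.
- by move=> p; rewrite [p]vec3E; apply: (immersion_at_vec3 three0).
- move=> p q; rewrite [p]vec3E [q]vec3E => p0 q0 [c [c0 /(Fmap_fibres p0 q0 c0)]].
  case=> [|[[]|[]]]; first by left.
  + by move=> /(E1_vec3 p0) ? /(E1_vec3 q0) ?; right; left.
  + by move=> /(E2_vec3 hw p0) ? /(E2_vec3 hw q0) ?; right; right.
- move=> p; rewrite [p]vec3E => p0 /(E1_vec3 p0) /(Fmap_coord_point p0) [k k0 ->].
  exact: proj_eq_scale.
- move=> p; rewrite [p]vec3E => p0 /(E2_vec3 hw p0) /(Fmap_cyclic_fixed p0) [k k0 ->].
  exact: proj_eq_scale.
Qed.
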